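(* Let $(S_b,I_b,R_b,D_b,S_r,I_r,R_r,D_r)$ be a solution of the modified Lanchester/SIR system defined for all $t\ge0$ with nonnegative components and nonnegative initial conditions, and suppose all model parameters are constant for $t\ge T_0$ for some $T_0$ (i.e. all switching events have occurred). Then for each compartment $C\in\{S_b,I_b,R_b,D_b,S_r,I_r,R_r,D_r\}$, $C'(t)\to 0$ as $t\to\infty$.
   Context: Barrier function: $f(x)=\exp(-0.0001/x)$ for $x>0$, $f(0)=0$; $f(x)x^a:=0$ at $x=0$. System (with $N_b=S_b+I_b+R_b$, $N_r=S_r+I_r+R_r$, $1/N$-terms set to $0$ when $N=0$), $A_r := \delta_r(f(S_r)S_r^p+f(R_r)R_r^p+\eta_r f(I_r)I_r^p)$: $S_b' = -\beta_b S_bI_b/N_b - \gamma_b S_b - A_r f(S_b)S_b^q - \alpha_r(S_r+R_r)S_b$, $I_b' = \beta_b S_bI_b/N_b - \tilde\gamma_b I_b(S_b+R_b)/N_b - A_r f(I_b)I_b^q + \alpha_r(S_r+R_r)S_b$, $R_b' = \gamma_b S_b + \tilde\gamma_b I_b(S_b+R_b)/N_b - A_r f(R_b)R_b^q$, $D_b' = A_r(f(S_b)S_b^q+f(I_b)I_b^q+f(R_b)R_b^q)$, red equations by interchanging $b$ and $r$. Parameters $\alpha,\beta,\tilde\gamma,\delta\ge0$, $\gamma,\eta\in[0,1]$, $p,q\ge0$; the parameters $\alpha,\gamma,\tilde\gamma,\delta$ may be piecewise constant in time (switched on/off at finitely many event times). *)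

From Stdlib Require Import Reals Lra List.
Open Scope R_scope.

(* f(x) x^a with the barrier f(x) = exp(-0.0001/x); set to 0 for x <= 0
   (the convention f(x)x^a := 0 at x = 0; components are nonnegative). *)
Definition fpow (x a : R) : R :=
  if Rlt_dec 0 x then exp (- (1/10000) / x) * Rpower x a else 0.

(* num / N, with the convention that 1/N-terms are 0 when N = 0 *)
Definition divN (num N : R) : R :=
  if Req_EM_T N 0 then 0 else num / N.

Definition attack (delta eta p S I Rc : R) : R :=
  delta * (fpow S p + fpow Rc p + eta * fpow I p).

(* right-hand sides for one side (own compartments S I R, opponent's So Ro,
   opponent's attack strength A, opponent's alpha alpha_o) *)
Definition rhsS (beta gamma alpha_o A q S I Rc So Ro : R) : R :=
  - beta * divN (S * I) (S + I + Rc) - gamma * S - A * fpow S q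
  - alpha_o * (So + Ro) * S.
Definition rhsI (beta gtilde alpha_o A q S I Rc So Ro : R) : R :=
  beta * divN (S * I) (S + I + Rc) - gtilde * divN (I * (S + Rc)) (S + I + Rc)
  - A * fpow I q + alpha_o * (So + Ro) * S.
Definition rhsR (gamma gtilde A q S I Rc : R) : R :=
  gamma * S + gtilde * divN (I * (S + Rc)) (S + I + Rc) - A * fpow Rc q.
Definition rhsD (A q S I Rc : R) : R :=
  A * (fpow S q + fpow I q + fpow Rc q).

Definition piecewise_const (ev : list R) (h : R -> R) : Prop :=
  forall t1 t2, 0 <= t1 <= t2 ->
    (forall e, In e ev -> e < t1 \/ t2 < e) -> h t1 = h t2.

Definition const_from (T0 : R) (h : R -> R) : Prop :=
  forall t, T0 <= t -> h t = h T0.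

Definition deriv_tends_to_0 (C : R -> R) : Prop :=
  forall eps, 0 < eps -> exists M, forall t, M <= t ->
    exists l, derivable_pt_lim C t l /\ Rabs l < eps.

(* Fix a time T after T0 and after every event.  On [T, +oo) the parameters are
   constant and, for each side, S + I + R + D is conserved (the right-hand sides
   sum to 0), so with nonnegativity every compartment is bounded.  The right-hand
   sides are then bounded, so the compartments are Lipschitz, hence uniformly
   continuous; since the barrier term f(x) x^a is continuous on compacts and the
   incidence x y / (x + y + z) is 1-Lipschitz in each argument, the right-hand
   sides are uniformly continuous too.  Now -S, D and R + D are nondecreasing and
   bounded, with uniformly continuous derivatives, so by Barbalat's lemma
   S', D' and (R + D)' tend to 0, and so do R' and I' = -(S' + R' + D'). *)
From Stdlib Require Import Reals Lra List Classical.
Open Scope R_scope.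

Lemma fpow_nonneg x a : 0 <= fpow x a.
Proof.
  unfold fpow; destruct (Rlt_dec 0 x); [|lra].
  apply Rmult_le_pos; left; [apply exp_pos | unfold Rpower; apply exp_pos].
Qed.

(* Near 0 the barrier dominates the power: f(x) x^a <= 10000 x for 0 < x < 1,
   since x^a <= 1 and exp(-y) <= 1/y for y = 1/(10000 x) > 0. *)
Lemma fpow_le_linear x a : 0 <= a -> 0 < x < 1 -> fpow x a <= 10000 * x.
Proof.
  intros Ha Hx. unfold fpow; destruct (Rlt_dec 0 x) as [_|]; [|lra].
  assert (Hpow : 0 < Rpower x a <= 1).
  { unfold Rpower; split; [apply exp_pos|]. rewrite <- exp_0.
    assert (ln x < 0) by (rewrite <- ln_1; apply ln_increasing; lra).
    destruct (Req_dec a 0) as [->|]; [rewrite Rmult_0_l; lra|].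
    left; apply exp_increasing; nra. }
  assert (Hbar : exp (- (1/10000) / x) <= 10000 * x).
  { set (y := (1/10000) / x).
    assert (Hy : 0 < y) by (unfold y; apply Rdiv_lt_0_compat; lra).
    replace (- (1/10000) / x) with (- y) by (unfold y; field; lra).
    rewrite exp_Ropp. pose proof (exp_ineq1_le y).
    replace (10000 * x) with (/ y) by (unfold y; field; lra).
    apply Rinv_le_contravar; lra. }
  pose proof (exp_pos (- (1/10000) / x)). nra.
Qed.

Lemma fpow_continuous_pos a c : 0 < c -> continuity_pt (fun x => fpow x a) c.
Proof.
  intros Hc.
  apply continuity_pt_locally_ext with
    (f := fun x => exp (- (1/10000) / x) * Rpower x a) (a := c); [exact Hc| |].
  - intros y Hy. unfold Rdist in Hy. apply Rabs_def2 in Hy.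
    unfold fpow; destruct (Rlt_dec 0 y); [reflexivity | lra].
  - apply continuity_pt_mult.
    + apply (continuity_pt_comp (fun x => - (1/10000) / x) exp).
      * change (continuity_pt (fct_cte (- (1/10000)) / id)%F c).
        apply continuity_pt_div; [| |unfold id; lra];
          apply derivable_continuous_pt; [apply derivable_pt_const | apply derivable_pt_id].
      * apply derivable_continuous_pt, derivable_pt_exp.
    + apply derivable_continuous_pt. exists (a * Rpower c (a - 1)).
      now apply derivable_pt_lim_power.
Qed.

(* Continuity at 0 follows from the linear bound near 0. *)
Lemma fpow_continuous_zero a : 0 <= a -> continuity_pt (fun x => fpow x a) 0.
Proof.
  intros Ha eps Heps. exists (Rmin 1 (eps / 20000)).
  split; [apply Rmin_pos; lra|]. intros x [_ Hx]. simpl in *. unfold Rdist in *.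
  assert (H0 : fpow 0 a = 0) by (unfold fpow; destruct (Rlt_dec 0 0); [lra | reflexivity]).
  rewrite H0, Rminus_0_r. rewrite Rminus_0_r in Hx.
  pose proof (Rmin_l 1 (eps / 20000)). pose proof (Rmin_r 1 (eps / 20000)).
  pose proof (fpow_nonneg x a).
  destruct (Rlt_dec 0 x) as [Hpos|Hnpos].
  - rewrite Rabs_right in Hx by lra. rewrite Rabs_right by lra.
    pose proof (fpow_le_linear x a Ha ltac:(lra)). lra.
  - unfold fpow; destruct (Rlt_dec 0 x); [lra|]. rewrite Rabs_R0; lra.
Qed.

Lemma fpow_continuous a c : 0 <= a -> 0 <= c -> continuity_pt (fun x => fpow x a) c.
Proof.
  intros Ha [Hc | <-]; [now apply fpow_continuous_pos | now apply fpow_continuous_zero].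
Qed.

Lemma divN_pos num N : 0 < N -> divN num N = num / N.
Proof. intros; unfold divN; destruct Req_EM_T; [lra | reflexivity]. Qed.

Lemma divN_zero_num N : divN 0 N = 0.
Proof. unfold divN; destruct Req_EM_T; [|unfold Rdiv]; ring. Qed.

Lemma divN_nonneg num N : 0 <= num -> 0 <= N -> 0 <= divN num N.
Proof.
  intros. unfold divN; destruct Req_EM_T; [lra|].
  apply Rmult_le_pos; [lra | left; apply Rinv_0_lt_compat; lra].
Qed.

Lemma incidence_bounds x y z : 0 <= x -> 0 <= y -> 0 <= z ->
  0 <= divN (x * y) (x + y + z) <= x.
Proof.
  intros. split; [apply divN_nonneg; nra|].
  destruct (Req_dec (x + y + z) 0).
  - unfold divN; destruct Req_EM_T; lra.
  - rewrite divN_pos by lra. apply Rmult_le_reg_r with (x + y + z); [lra|].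
    unfold Rdiv; rewrite Rmult_assoc, Rinv_l by lra. nra.
Qed.

Lemma Rabs_scale_le a b w : 0 <= a <= b -> 0 < b -> Rabs (a / b * w) <= Rabs w.
Proof.
  intros. assert (0 <= a / b <= 1).
  { split; [apply Rmult_le_pos; [lra | left; apply Rinv_0_lt_compat; lra]|].
    apply Rmult_le_reg_r with b; [lra|]. unfold Rdiv; rewrite Rmult_assoc, Rinv_l; lra. }
  rewrite Rabs_mult, (Rabs_right (a / b)) by lra. pose proof (Rabs_pos w). nra.
Qed.

(* Lipschitz in the numerator variable: u d / (u + c) - u' d / (u' + c) equals
   d c / ((u + c)(u' + c)) (u - u'), a factor in [0, 1] when 0 <= d <= c. *)
Lemma incidence_lipschitz_num u u' c d : 0 <= u -> 0 <= u' -> 0 <= d -> d <= c ->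
  Rabs (divN (u * d) (u + c) - divN (u' * d) (u' + c)) <= Rabs (u - u').
Proof.
  intros. destruct (Req_dec c 0).
  - assert (d = 0) by lra. subst.
    rewrite !Rmult_0_r, !divN_zero_num, Rminus_diag, Rabs_R0. apply Rabs_pos.
  - rewrite !divN_pos by lra.
    replace (u * d / (u + c) - u' * d / (u' + c))
      with (d * c / ((u + c) * (u' + c)) * (u - u')) by (field; lra).
    apply Rabs_scale_le; nra.
Qed.

(* Lipschitz in the denominator: P / (e + z) - P / (e + z') equals
   P / ((e + z)(e + z')) (z' - z), a factor in [0, 1] when 0 <= P <= e^2. *)
Lemma incidence_lipschitz_den e P z z' : 0 <= e -> 0 <= z -> 0 <= z' -> 0 <= P -> P <= e * e ->
  Rabs (divN P (e + z) - divN P (e + z')) <= Rabs (z - z').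
Proof.
  intros. destruct (Req_dec e 0).
  - assert (P = 0) by nra. subst.
    rewrite !divN_zero_num, Rminus_diag, Rabs_R0. apply Rabs_pos.
  - rewrite !divN_pos by lra.
    replace (P / (e + z) - P / (e + z')) with (- (P / ((e + z) * (e + z')) * (z - z')))
      by (field; lra).
    rewrite Rabs_Ropp. apply Rabs_scale_le; nra.
Qed.

(* The incidence is 1-Lipschitz in each of its three (nonnegative) arguments:
   change x, then y, then z, one at a time. *)
Lemma incidence_lipschitz x y z x' y' z' :
  0 <= x -> 0 <= y -> 0 <= z -> 0 <= x' -> 0 <= y' -> 0 <= z' ->
  Rabs (divN (x * y) (x + y + z) - divN (x' * y') (x' + y' + z'))
    <= Rabs (x - x') + Rabs (y - y') + Rabs (z - z').
Proof.
  intros.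
  set (a := divN (x * y) (x + y + z)).
  set (b := divN (x' * y) (x' + y + z)).
  set (c := divN (x' * y') (x' + y' + z)).
  set (d := divN (x' * y') (x' + y' + z')).
  assert (Hab : Rabs (a - b) <= Rabs (x - x')).
  { unfold a, b. rewrite !(Rplus_assoc _ y z). apply incidence_lipschitz_num; lra. }
  assert (Hbc : Rabs (b - c) <= Rabs (y - y')).
  { unfold b, c. rewrite (Rplus_comm x' y), (Rplus_comm x' y'), !(Rplus_assoc _ x' z),
      (Rmult_comm x' y), (Rmult_comm x' y').
    apply incidence_lipschitz_num; lra. }
  assert (Hcd : Rabs (c - d) <= Rabs (z - z')) by (apply incidence_lipschitz_den; nra).
  replace (a - d) with ((a - b) + (b - c) + (c - d)) by ring.
  pose proof (Rabs_triang ((a - b) + (b - c)) (c - d)).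
  pose proof (Rabs_triang (a - b) (b - c)). lra.
Qed.

Definition unif_cont_from (T : R) (g : R -> R) : Prop :=
  forall eps, 0 < eps -> exists delta, 0 < delta /\
    forall t s, T <= t -> T <= s -> Rabs (t - s) < delta -> Rabs (g t - g s) < eps.

Definition bounded_from (T : R) (g : R -> R) : Prop :=
  exists B, forall t, T <= t -> Rabs (g t) <= B.

Definition nonneg_from (T : R) (g : R -> R) : Prop :=
  forall t, T <= t -> 0 <= g t.

(* Uniformly continuous and bounded: closed under the operations building the
   right-hand sides of the system. *)
Definition tame (T : R) (g : R -> R) : Prop := unif_cont_from T g /\ bounded_from T g.

Lemma bounded_from_pos T g : bounded_from T g -> exists B, 0 < B /\ forall t, T <= t -> Rabs (g t) <= B.
Proof.
  intros [B HB]. exists (Rabs B + 1). split; [pose proof (Rabs_pos B); lra|].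
  intros t Ht. pose proof (HB t Ht). pose proof (Rle_abs B). lra.
Qed.

Lemma nonneg_bounded_range T x : nonneg_from T x -> bounded_from T x ->
  exists K, 0 <= K /\ forall t, T <= t -> 0 <= x t <= K.
Proof.
  intros Hx [K HK]. exists K. split.
  - pose proof (HK T (Rle_refl T)). pose proof (Rabs_pos (x T)). lra.
  - intros t Ht. pose proof (HK t Ht). pose proof (Hx t Ht).
    rewrite Rabs_right in * by lra. lra.
Qed.

Lemma unif_cont_dominated T c f g k h : 0 <= c ->
  unif_cont_from T f -> unif_cont_from T g -> unif_cont_from T k ->
  (forall t s, T <= t -> T <= s ->
     Rabs (h t - h s) <= c * (Rabs (f t - f s) + Rabs (g t - g s) + Rabs (k t - k s))) ->
  unif_cont_from T h.
Proof.
  intros Hc Uf Ug Uk Hh eps Heps.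
  set (e := eps / (3 * (c + 1))).
  assert (He : 0 < e) by (unfold e; apply Rdiv_lt_0_compat; lra).
  destruct (Uf e He) as [d1 [Hd1 K1]]. destruct (Ug e He) as [d2 [Hd2 K2]].
  destruct (Uk e He) as [d3 [Hd3 K3]].
  exists (Rmin d1 (Rmin d2 d3)). split; [repeat apply Rmin_pos; assumption|].
  intros t s Ht Hs Hts.
  pose proof (Rmin_l d1 (Rmin d2 d3)). pose proof (Rmin_r d1 (Rmin d2 d3)).
  pose proof (Rmin_l d2 d3). pose proof (Rmin_r d2 d3).
  specialize (K1 t s Ht Hs ltac:(lra)). specialize (K2 t s Ht Hs ltac:(lra)).
  specialize (K3 t s Ht Hs ltac:(lra)). specialize (Hh t s Ht Hs).
  assert (Hsum : c * (3 * e) < eps).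
  { replace (c * (3 * e)) with (eps - eps / (c + 1)) by (unfold e; field; lra).
    pose proof (Rdiv_lt_0_compat eps (c + 1) Heps ltac:(lra)). lra. }
  assert (c * (Rabs (f t - f s) + Rabs (g t - g s) + Rabs (k t - k s)) <= c * (3 * e)).
  { apply Rmult_le_compat_l; lra. }
  lra.
Qed.

Lemma unif_cont_const T a : unif_cont_from T (fun _ => a).
Proof.
  intros eps Heps. exists 1. split; [lra|]. intros. rewrite Rminus_diag, Rabs_R0. exact Heps.
Qed.

Lemma bounded_const T a : bounded_from T (fun _ => a).
Proof. exists (Rabs a). intros; apply Rle_refl. Qed.

Lemma bounded_plus T f g : bounded_from T f -> bounded_from T g ->
  bounded_from T (fun t => f t + g t).
Proof.
  intros [B1 H1] [B2 H2]. exists (B1 + B2). intros t Ht.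
  pose proof (Rabs_triang (f t) (g t)). pose proof (H1 t Ht). pose proof (H2 t Ht). lra.
Qed.

Lemma bounded_opp T f : bounded_from T f -> bounded_from T (fun t => - f t).
Proof. intros [B H]. exists B. intros t Ht. rewrite Rabs_Ropp. auto. Qed.

Lemma bounded_minus T f g : bounded_from T f -> bounded_from T g ->
  bounded_from T (fun t => f t - g t).
Proof. intros. apply (bounded_plus T f (fun t => - g t)); [|apply bounded_opp]; assumption. Qed.

Lemma bounded_mult T f g : bounded_from T f -> bounded_from T g ->
  bounded_from T (fun t => f t * g t).
Proof.
  intros [B1 H1] [B2 H2]. exists (B1 * B2). intros t Ht. rewrite Rabs_mult.
  apply Rmult_le_compat; auto; apply Rabs_pos.
Qed.

(* The barrier term of a nonnegative bounded function is bounded: fpow is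
   continuous on the compact range [0, K]. *)
Lemma bounded_fpow T x a : 0 <= a -> nonneg_from T x -> bounded_from T x ->
  bounded_from T (fun t => fpow (x t) a).
Proof.
  intros Ha Hx Bx. destruct (nonneg_bounded_range T x Hx Bx) as [K [HK Hrange]].
  destruct (continuity_ab_maj (fun y => fpow y a) 0 K HK) as [M [HM _]].
  { intros c Hc. apply fpow_continuous; lra. }
  exists (fpow M a). intros t Ht. rewrite Rabs_right by (apply Rle_ge, fpow_nonneg).
  apply HM, Hrange, Ht.
Qed.

Lemma bounded_incidence T x y z : nonneg_from T x -> nonneg_from T y -> nonneg_from T z ->
  bounded_from T x -> bounded_from T (fun t => divN (x t * y t) (x t + y t + z t)).
Proof.
  intros Hx Hy Hz [B HB]. exists B. intros t Ht.
  pose proof (incidence_bounds (x t) (y t) (z t) (Hx t Ht) (Hy t Ht) (Hz t Ht)).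
  pose proof (HB t Ht). pose proof (Hx t Ht). rewrite Rabs_right in * by lra. lra.
Qed.

Lemma tame_const T a : tame T (fun _ => a).
Proof. split; [apply unif_cont_const | apply bounded_const]. Qed.

Lemma tame_plus T f g : tame T f -> tame T g -> tame T (fun t => f t + g t).
Proof.
  intros [Uf Bf] [Ug Bg]. split; [|apply bounded_plus; assumption].
  apply (unif_cont_dominated T 1 f g (fun _ => 0)); try assumption; [lra | apply unif_cont_const|].
  intros t s _ _. rewrite Rminus_diag, Rabs_R0, Rplus_0_r, Rmult_1_l.
  replace (f t + g t - (f s + g s)) with ((f t - f s) + (g t - g s)) by ring.
  apply Rabs_triang.
Qed.

Lemma tame_opp T f : tame T f -> tame T (fun t => - f t).
Proof.
  intros [Uf Bf]. split; [|apply bounded_opp; assumption].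
  apply (unif_cont_dominated T 1 f f f); try assumption; [lra|].
  intros t s _ _. replace (- f t - - f s) with (- (f t - f s)) by ring.
  rewrite Rabs_Ropp. pose proof (Rabs_pos (f t - f s)). lra.
Qed.

Lemma tame_minus T f g : tame T f -> tame T g -> tame T (fun t => f t - g t).
Proof. intros. apply (tame_plus T f (fun t => - g t)); [|apply tame_opp]; assumption. Qed.

(* f g - f' g' = (f - f') g + f' (g - g'), with both factors bounded by B. *)
Lemma tame_mult T f g : tame T f -> tame T g -> tame T (fun t => f t * g t).
Proof.
  intros [Uf Bf] [Ug Bg]. split; [|apply bounded_mult; assumption].
  destruct (bounded_from_pos T (fun t => Rabs (f t) + Rabs (g t))) as [B [HB Hbnd]].
  { apply bounded_plus; [destruct Bf as [b Hb] | destruct Bg as [b Hb]]; exists b;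
      intros t Ht; rewrite Rabs_Rabsolu; auto. }
  apply (unif_cont_dominated T B f g (fun _ => 0)); try assumption; [lra | apply unif_cont_const|].
  intros t s Ht Hs. rewrite Rminus_diag, Rabs_R0, Rplus_0_r.
  replace (f t * g t - f s * g s) with ((f t - f s) * g t + f s * (g t - g s)) by ring.
  eapply Rle_trans; [apply Rabs_triang|]. rewrite !Rabs_mult.
  pose proof (Hbnd t Ht). pose proof (Hbnd s Hs).
  pose proof (Rabs_pos (f s)). pose proof (Rabs_pos (g t)).
  pose proof (Rabs_pos (f t)). pose proof (Rabs_pos (g s)).
  rewrite Rabs_right in * by lra.
  pose proof (Rabs_pos (f t - f s)). pose proof (Rabs_pos (g t - g s)). nra.
Qed.

(* Uniform continuity of fpow on the compact range (Heine) transfers to the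
   composite with a uniformly continuous function. *)
Lemma tame_fpow T x a : 0 <= a -> nonneg_from T x -> tame T x -> tame T (fun t => fpow (x t) a).
Proof.
  intros Ha Hx [Ux Bx]. split; [|apply bounded_fpow; assumption].
  destruct (nonneg_bounded_range T x Hx Bx) as [K [HK Hrange]].
  intros eps Heps.
  destruct (Heine (fun y => fpow y a) (fun c => 0 <= c <= K) (compact_P3 0 K)
              (fun c Hc => fpow_continuous a c Ha (proj1 Hc)) (mkposreal eps Heps))
    as [[d Hd] Hunif].
  destruct (Ux d Hd) as [d' [Hd' Hx']]. exists d'. split; [exact Hd'|].
  intros t s Ht Hs Hts. apply Hunif; auto.
Qed.

Lemma tame_incidence T x y z : nonneg_from T x -> nonneg_from T y -> nonneg_from T z ->
  tame T x -> tame T y -> tame T z -> tame T (fun t => divN (x t * y t) (x t + y t + z t)).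
Proof.
  intros Hx Hy Hz [Ux Bx] [Uy By] [Uz Bz]. split; [|apply bounded_incidence; assumption].
  apply (unif_cont_dominated T 1 x y z); try assumption; [lra|].
  intros t s Ht Hs. rewrite Rmult_1_l. apply incidence_lipschitz; auto.
Qed.

Lemma bounded_ext T f g : (forall t, T <= t -> f t = g t) -> bounded_from T f -> bounded_from T g.
Proof. intros E [B HB]. exists B. intros t Ht. rewrite <- E by exact Ht. auto. Qed.

Lemma tame_ext T f g : (forall t, T <= t -> f t = g t) -> tame T f -> tame T g.
Proof.
  intros E [Uf Bf]. split; [|apply (bounded_ext T f); assumption].
  intros eps Heps. destruct (Uf eps Heps) as [d [Hd K]]. exists d. split; [exact Hd|].
  intros t s Ht Hs Hts. rewrite <- (E t Ht), <- (E s Hs). auto.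
Qed.

(* The recovery term I (S + R) / (S + I + R) is the incidence of I against S + R. *)
Lemma recovery_as_incidence s i r :
  divN (i * (s + r)) (i + (s + r) + 0) = divN (i * (s + r)) (s + i + r).
Proof. f_equal. ring. Qed.

Lemma bounded_recovery T s i r : nonneg_from T s -> nonneg_from T i -> nonneg_from T r ->
  bounded_from T i -> bounded_from T (fun t => divN (i t * (s t + r t)) (s t + i t + r t)).
Proof.
  intros Hs Hi Hr Bi. apply (bounded_ext T (fun t => divN (i t * (s t + r t)) (i t + (s t + r t) + 0))).
  { intros t _; apply recovery_as_incidence. }
  apply (bounded_incidence T i (fun t => s t + r t) (fun _ => 0)); try assumption.
  - intros t Ht. pose proof (Hs t Ht). pose proof (Hr t Ht). lra.
  - intros t _. lra.
Qed.

Lemma tame_recovery T s i r : nonneg_from T s -> nonneg_from T i -> nonneg_from T r ->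
  tame T s -> tame T i -> tame T r -> tame T (fun t => divN (i t * (s t + r t)) (s t + i t + r t)).
Proof.
  intros Hs Hi Hr Ts Ti Tr. apply (tame_ext T (fun t => divN (i t * (s t + r t)) (i t + (s t + r t) + 0))).
  { intros t _; apply recovery_as_incidence. }
  apply (tame_incidence T i (fun t => s t + r t) (fun _ => 0));
    [| | |assumption | apply tame_plus; assumption | apply tame_const]; try assumption.
  - intros t Ht. pose proof (Hs t Ht). pose proof (Hr t Ht). lra.
  - intros t _. lra.
Qed.

Ltac solve_bounded := repeat first
  [ apply bounded_plus | apply bounded_minus | apply bounded_opp | apply bounded_mult
  | apply bounded_const | apply bounded_fpow | apply bounded_recovery
  | apply bounded_incidence | assumption ].

Ltac solve_tame := repeat first
  [ apply tame_plus | apply tame_minus | apply tame_opp | apply tame_mult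
  | apply tame_const | apply tame_fpow | apply tame_recovery
  | apply tame_incidence | assumption ].

Lemma lipschitz_of_bounded_deriv T B x d :
  (forall t, T <= t -> derivable_pt_lim x t (d t)) -> (forall t, T <= t -> Rabs (d t) <= B) ->
  forall t s, T <= t -> T <= s -> Rabs (x t - x s) <= B * Rabs (t - s).
Proof.
  intros Hd HB.
  assert (Hlt : forall t s, T <= s -> s < t -> Rabs (x t - x s) <= B * Rabs (t - s)).
  { intros t s Hs Hst. destruct (MVT_cor2 x d s t Hst) as [c [Hc Hcst]].
    { intros c Hc. apply Hd. lra. }
    rewrite Hc, Rabs_mult. apply Rmult_le_compat_r; [apply Rabs_pos | apply HB; lra]. }
  intros t s Ht Hs. destruct (Rtotal_order s t) as [Hst | [<- | Hts]].
  - auto.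
  - rewrite !Rminus_diag, !Rabs_R0, Rmult_0_r. lra.
  - rewrite Rabs_minus_sym, (Rabs_minus_sym t). auto.
Qed.

Lemma unif_cont_of_bounded_deriv T x d :
  (forall t, T <= t -> derivable_pt_lim x t (d t)) -> bounded_from T d -> unif_cont_from T x.
Proof.
  intros Hd Bd. destruct (bounded_from_pos T d Bd) as [B [HB Hbnd]].
  intros eps Heps. exists (eps / B). split; [apply Rdiv_lt_0_compat; assumption|].
  intros t s Ht Hs Hts. eapply Rle_lt_trans; [apply (lipschitz_of_bounded_deriv T B x d); auto|].
  apply Rmult_lt_reg_l with (/ B); [apply Rinv_0_lt_compat; lra|].
  rewrite <- Rmult_assoc, Rinv_l, Rmult_1_l by lra. rewrite Rmult_comm. exact Hts.
Qed.

Lemma constant_of_zero_deriv T x :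
  (forall t, T <= t -> derivable_pt_lim x t 0) -> forall t, T <= t -> x t = x T.
Proof.
  intros Hd t Ht.
  pose proof (lipschitz_of_bounded_deriv T 0 x (fun _ => 0) Hd
                ltac:(intros; cbv beta; rewrite Rabs_R0; lra) t T Ht (Rle_refl T)) as H.
  rewrite Rmult_0_l in H. unfold Rabs in H. destruct Rcase_abs in H; lra.
Qed.

Lemma nondecreasing_of_nonneg_deriv T W g :
  (forall t, T <= t -> derivable_pt_lim W t (g t)) -> nonneg_from T g ->
  forall s t, T <= s -> s <= t -> W s <= W t.
Proof.
  intros Hd Hg s t Hs [Hst | <-]; [|lra].
  destruct (MVT_cor2 W g s t Hst) as [c [Hc Hcst]]; [intros c Hc; apply Hd; lra|].
  pose proof (Hg c ltac:(lra)). nra.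
Qed.

(* A nondecreasing function bounded above on [T, +oo) eventually increases by
   less than any r > 0: it gets within r of its supremum. *)
Lemma monotone_bounded_settles T W :
  (forall s t, T <= s -> s <= t -> W s <= W t) -> (exists B, forall t, T <= t -> W t <= B) ->
  forall r, 0 < r -> exists M, T <= M /\ forall s t, M <= s -> M <= t -> W t - W s < r.
Proof.
  intros Hmono [B HB] r Hr.
  set (E := fun y => exists t, T <= t /\ y = W t).
  destruct (completeness E) as [L [HL_ub HL_least]].
  { exists B. intros y [t [Ht ->]]. auto. }
  { exists (W T), T. split; [lra | reflexivity]. }
  assert (HM : exists M, T <= M /\ L - r < W M).
  { apply NNPP. intros Hno.
    assert (L <= L - r); [|lra].
    apply HL_least. intros y [t [Ht ->]].
    destruct (Rle_or_lt (W t) (L - r)) as [|Hlt]; [assumption|].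
    exfalso. apply Hno. exists t. auto. }
  destruct HM as [M [HTM HWM]]. exists M. split; [exact HTM|].
  intros s t Hs Ht.
  assert (W t <= L) by (apply HL_ub; exists t; split; [lra | reflexivity]).
  assert (W M <= W s) by (apply Hmono; lra). lra.
Qed.

Definition vanishes (g : R -> R) : Prop :=
  forall eps, 0 < eps -> exists M, forall t, M <= t -> Rabs (g t) < eps.

(* Barbalat's lemma, monotone form: if W' = g >= 0 is uniformly continuous on
   [T, +oo) and W is bounded above there, then g -> 0.  If g(t) >= eps, then
   g > eps/2 on [t, t + h], so W would increase by eps h / 2 after settling. *)
Lemma barbalat T W g :
  (forall t, T <= t -> derivable_pt_lim W t (g t)) -> nonneg_from T g -> unif_cont_from T g ->
  (exists B, forall t, T <= t -> W t <= B) -> vanishes g.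
Proof.
  intros Hd Hg Ug HB eps Heps.
  destruct (Ug (eps / 2)) as [delta [Hdelta Hclose]]; [lra|].
  set (h := delta / 2). assert (Hh : 0 < h) by (unfold h; lra).
  destruct (monotone_bounded_settles T W (nondecreasing_of_nonneg_deriv T W g Hd Hg) HB
              (eps * h / 2)) as [M [HTM Hsettle]].
  { apply Rmult_lt_0_compat; [apply Rmult_lt_0_compat|]; lra. }
  exists M. intros t Ht. rewrite Rabs_right by (apply Rle_ge, Hg; lra).
  apply Rnot_le_lt. intros Hbig.
  destruct (MVT_cor2 W g t (t + h)) as [c [Hc Hct]]; [lra | intros c Hc; apply Hd; lra|].
  assert (Hgc : eps / 2 < g c).
  { assert (Rabs (c - t) < delta) by (rewrite Rabs_right; unfold h in *; lra).
    pose proof (Hclose c t ltac:(lra) ltac:(lra) ltac:(assumption)) as Hcl.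
    apply Rabs_def2 in Hcl. lra. }
  pose proof (Hsettle t (t + h) ltac:(lra) ltac:(lra)).
  replace (t + h - t) with h in Hc by ring. nra.
Qed.

Lemma vanishes_le g h : vanishes g -> (forall t, Rabs (h t) <= Rabs (g t)) -> vanishes h.
Proof.
  intros Hg Hle eps Heps. destruct (Hg eps Heps) as [M HM]. exists M.
  intros t Ht. eapply Rle_lt_trans; [apply Hle | auto].
Qed.

Lemma vanishes_minus f g : vanishes f -> vanishes g -> vanishes (fun t => f t - g t).
Proof.
  intros Hf Hg eps Heps.
  destruct (Hf (eps / 2)) as [M1 H1]; [lra|]. destruct (Hg (eps / 2)) as [M2 H2]; [lra|].
  exists (Rmax M1 M2). intros t Ht.
  pose proof (H1 t (Rle_trans _ _ _ (Rmax_l M1 M2) Ht)).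
  pose proof (H2 t (Rle_trans _ _ _ (Rmax_r M1 M2) Ht)).
  pose proof (Rabs_triang (f t) (- g t)). rewrite Rabs_Ropp in *. unfold Rminus. lra.
Qed.

Lemma deriv_tends_to_0_of_vanishes T C g :
  (forall t, T <= t -> derivable_pt_lim C t (g t)) -> vanishes g -> deriv_tends_to_0 C.
Proof.
  intros Hd Hg eps Heps. destruct (Hg eps Heps) as [M HM]. exists (Rmax M T).
  intros t Ht. exists (g t). split.
  - apply Hd. eapply Rle_trans; [apply Rmax_r | exact Ht].
  - apply HM. eapply Rle_trans; [apply Rmax_l | exact Ht].
Qed.

Lemma rhs_sum_zero beta gam gt ao A q S I Rc So Ro :
  rhsS beta gam ao A q S I Rc So Ro + rhsI beta gt ao A q S I Rc So Ro +
  rhsR gam gt A q S I Rc + rhsD A q S I Rc = 0.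
Proof. unfold rhsS, rhsI, rhsR, rhsD. ring. Qed.

Lemma rhsS_nonpos beta gam ao A q S I Rc So Ro :
  0 <= beta -> 0 <= gam -> 0 <= ao -> 0 <= A -> 0 <= S -> 0 <= I -> 0 <= Rc ->
  0 <= So -> 0 <= Ro -> rhsS beta gam ao A q S I Rc So Ro <= 0.
Proof.
  intros. unfold rhsS.
  pose proof (divN_nonneg (S * I) (S + I + Rc) ltac:(nra) ltac:(lra)).
  pose proof (fpow_nonneg S q).
  assert (0 <= ao * (So + Ro) * S) by (apply Rmult_le_pos; nra). nra.
Qed.

Lemma rhsD_nonneg A q S I Rc : 0 <= A -> 0 <= rhsD A q S I Rc.
Proof.
  intros. unfold rhsD.
  pose proof (fpow_nonneg S q). pose proof (fpow_nonneg I q). pose proof (fpow_nonneg Rc q). nra.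
Qed.

(* Removed plus dead only increase: the R-losses are exactly D-gains. *)
Lemma rhsR_rhsD_nonneg gam gt A q S I Rc :
  0 <= gam -> 0 <= gt -> 0 <= A -> 0 <= S -> 0 <= I -> 0 <= Rc ->
  0 <= rhsR gam gt A q S I Rc + rhsD A q S I Rc.
Proof.
  intros. unfold rhsR, rhsD.
  pose proof (divN_nonneg (I * (S + Rc)) (S + I + Rc) ltac:(nra) ltac:(lra)).
  pose proof (fpow_nonneg S q). pose proof (fpow_nonneg I q). nra.
Qed.

(* The four equations of one side on [T, +oo); the parameters gam, gt, the
   opponent's infiltration rate ao, attack strength A and compartments So, Ro
   are given functions of time. *)
Definition side_ode (T beta q : R) (gam gt ao A S I Rc D So Ro : R -> R) : Prop :=
  forall t, T <= t ->
    derivable_pt_lim S t (rhsS beta (gam t) (ao t) (A t) q (S t) (I t) (Rc t) (So t) (Ro t)) /\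
    derivable_pt_lim I t (rhsI beta (gt t) (ao t) (A t) q (S t) (I t) (Rc t) (So t) (Ro t)) /\
    derivable_pt_lim Rc t (rhsR (gam t) (gt t) (A t) q (S t) (I t) (Rc t)) /\
    derivable_pt_lim D t (rhsD (A t) q (S t) (I t) (Rc t)).

Section OneSide.

Variables (T beta q : R) (gam gt ao A S I Rc D So Ro : R -> R).
Hypothesis Hbeta : 0 <= beta.
Hypothesis Hq : 0 <= q.
Hypothesis Hode : side_ode T beta q gam gt ao A S I Rc D So Ro.
Hypotheses (HS : nonneg_from T S) (HI : nonneg_from T I) (HR : nonneg_from T Rc)
           (HD : nonneg_from T D).
Hypotheses (Hgam : nonneg_from T gam) (Hgt : nonneg_from T gt) (Hao : nonneg_from T ao)
           (HA : nonneg_from T A) (HSo : nonneg_from T So) (HRo : nonneg_from T Ro).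

Lemma side_total_constant t : T <= t -> S t + I t + Rc t + D t = S T + I T + Rc T + D T.
Proof.
  apply (constant_of_zero_deriv T (fun t => S t + I t + Rc t + D t)).
  intros u Hu. destruct (Hode u Hu) as [dS [dI [dR dD]]].
  rewrite <- (rhs_sum_zero beta (gam u) (gt u) (ao u) (A u) q (S u) (I u) (Rc u) (So u) (Ro u)).
  repeat apply derivable_pt_lim_plus; assumption.
Qed.

(* Hence every compartment stays in [0, total]. *)
Lemma side_bounded :
  bounded_from T S /\ bounded_from T I /\ bounded_from T Rc /\ bounded_from T D.
Proof.
  set (K := S T + I T + Rc T + D T).
  assert (Hle : forall x : R -> R, nonneg_from T x -> (forall t, T <= t -> x t <= K) ->
                  bounded_from T x).
  { intros x Hx Hxle. exists K. intros t Ht. rewrite Rabs_right by (apply Rle_ge, Hx, Ht).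
    auto. }
  repeat split; apply Hle; try assumption; intros t Ht;
    pose proof (side_total_constant t Ht); pose proof (HS t Ht); pose proof (HI t Ht);
    pose proof (HR t Ht); pose proof (HD t Ht); unfold K; lra.
Qed.

(* With bounded data, the derivatives of S, I, R are bounded, so S, I, R are
   uniformly continuous. *)
Lemma side_unif_cont :
  bounded_from T gam -> bounded_from T gt -> bounded_from T ao -> bounded_from T A ->
  bounded_from T So -> bounded_from T Ro ->
  unif_cont_from T S /\ unif_cont_from T I /\ unif_cont_from T Rc.
Proof.
  intros. destruct side_bounded as [BS [BI [BR _]]].
  repeat split; eapply unif_cont_of_bounded_deriv; try (intros t Ht; apply (Hode t Ht));
    unfold rhsS, rhsI, rhsR; solve_bounded.
Qed.

(* With tame data, -S', D' and (R + D)' are nonnegative, uniformly continuous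
   derivatives of functions bounded above, so they vanish by Barbalat's lemma;
   S', R' and I' = -(S' + R' + D') are combinations of these. *)
Lemma side_derivatives_vanish :
  tame T gam -> tame T gt -> tame T ao -> tame T A -> tame T So -> tame T Ro ->
  deriv_tends_to_0 S /\ deriv_tends_to_0 I /\ deriv_tends_to_0 Rc /\ deriv_tends_to_0 D.
Proof.
  intros Tgam Tgt Tao TA TSo TRo.
  destruct side_bounded as [BS [BI [BR BD]]].
  destruct side_unif_cont as [US [UI UR]];
    [apply Tgam | apply Tgt | apply Tao | apply TA | apply TSo | apply TRo |].
  assert (TS : tame T S) by (split; assumption).
  assert (TI : tame T I) by (split; assumption).
  assert (TR : tame T Rc) by (split; assumption).
  set (dS := fun t => rhsS beta (gam t) (ao t) (A t) q (S t) (I t) (Rc t) (So t) (Ro t)).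
  set (dI := fun t => rhsI beta (gt t) (ao t) (A t) q (S t) (I t) (Rc t) (So t) (Ro t)).
  set (dR := fun t => rhsR (gam t) (gt t) (A t) q (S t) (I t) (Rc t)).
  set (dD := fun t => rhsD (A t) q (S t) (I t) (Rc t)).
  assert (Hupper : forall x : R -> R, bounded_from T x -> exists B, forall t, T <= t -> x t <= B).
  { intros x [B HB]. exists B. intros t Ht. eapply Rle_trans; [apply Rle_abs | auto]. }
  assert (VS : vanishes (fun t => - dS t)).
  { apply (barbalat T (fun t => - S t)).
    - intros t Ht. apply derivable_pt_lim_opp, Hode, Ht.
    - intros t Ht. unfold dS. pose proof (rhsS_nonpos beta (gam t) (ao t) (A t) q (S t) (I t) (Rc t)
        (So t) (Ro t) Hbeta (Hgam t Ht) (Hao t Ht) (HA t Ht) (HS t Ht) (HI t Ht) (HR t Ht)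
        (HSo t Ht) (HRo t Ht)). lra.
    - enough (Hg : tame T (fun t => - dS t)) by apply Hg. unfold dS, rhsS. solve_tame.
    - exists 0. intros t Ht. pose proof (HS t Ht). lra. }
  assert (VD : vanishes dD).
  { apply (barbalat T D).
    - intros t Ht. apply Hode, Ht.
    - intros t Ht. apply rhsD_nonneg, HA, Ht.
    - enough (Hg : tame T dD) by apply Hg. unfold dD, rhsD. solve_tame.
    - apply Hupper, BD. }
  assert (VRD : vanishes (fun t => dR t + dD t)).
  { apply (barbalat T (fun t => Rc t + D t)).
    - intros t Ht. apply derivable_pt_lim_plus; apply Hode, Ht.
    - intros t Ht. apply rhsR_rhsD_nonneg; auto.
    - enough (Hg : tame T (fun t => dR t + dD t)) by apply Hg.
      unfold dR, dD, rhsR, rhsD. solve_tame.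
    - apply Hupper, bounded_plus; assumption. }
  repeat split; eapply deriv_tends_to_0_of_vanishes; try (intros t Ht; apply (Hode t Ht)).
  - apply (vanishes_le _ _ VS). intro t. rewrite Rabs_Ropp. apply Rle_refl.
  - apply (vanishes_le _ _ (vanishes_minus _ _ VS VRD)). intro t. apply Req_le.
    f_equal. pose proof (rhs_sum_zero beta (gam t) (gt t) (ao t) (A t) q (S t) (I t) (Rc t)
      (So t) (Ro t)). unfold dS, dI, dR, dD in *. lra.
  - apply (vanishes_le _ _ (vanishes_minus _ _ VRD VD)). intro t. apply Req_le. f_equal.
    unfold dR, dD. ring.
  - exact VD.
Qed.

End OneSide.

Lemma attack_nonneg delta eta p S I Rc : 0 <= delta -> 0 <= eta -> 0 <= attack delta eta p S I Rc.
Proof.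
  intros. unfold attack.
  pose proof (fpow_nonneg S p). pose proof (fpow_nonneg I p). pose proof (fpow_nonneg Rc p).
  apply Rmult_le_pos; nra.
Qed.

Lemma bounded_attack T delta eta p S I Rc : 0 <= p ->
  nonneg_from T S -> nonneg_from T I -> nonneg_from T Rc ->
  bounded_from T delta -> bounded_from T S -> bounded_from T I -> bounded_from T Rc ->
  bounded_from T (fun t => attack (delta t) eta p (S t) (I t) (Rc t)).
Proof. intros. unfold attack. solve_bounded. Qed.

Lemma tame_attack T delta eta p S I Rc : 0 <= p ->
  nonneg_from T S -> nonneg_from T I -> nonneg_from T Rc ->
  tame T delta -> tame T S -> tame T I -> tame T Rc ->
  tame T (fun t => attack (delta t) eta p (S t) (I t) (Rc t)).
Proof. intros. unfold attack. solve_tame. Qed.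

Lemma tame_of_const_from T0 T h : const_from T0 h -> T0 <= T -> tame T h.
Proof.
  intros Hh HT. apply (tame_ext T (fun _ => h T0)); [|apply tame_const].
  intros t Ht. symmetry. apply Hh. lra.
Qed.

Lemma time_after_events (ev : list R) (a : R) :
  exists T, a <= T /\ forall e, In e ev -> e < T.
Proof.
  induction ev as [|e0 ev IH].
  - exists a. split; [lra | intros e []].
  - destruct IH as [T [HaT HT]]. exists (Rmax T (e0 + 1)).
    pose proof (Rmax_l T (e0 + 1)). pose proof (Rmax_r T (e0 + 1)).
    split; [lra|]. intros e [<- | He]; [lra|]. pose proof (HT e He). lra.
Qed.

Lemma coupled_derivatives_vanish (T betab betar etab etar p q : R)
  (alphab alphar gammab gammar gtb gtr deltab deltar Sb Ib Rb Db Sr Ir Rr Dr : R -> R) :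
  0 <= betab -> 0 <= betar -> 0 <= etab -> 0 <= etar -> 0 <= p -> 0 <= q ->
  Forall (nonneg_from T)
    (alphab :: alphar :: gammab :: gammar :: gtb :: gtr :: deltab :: deltar :: nil) ->
  Forall (tame T)
    (alphab :: alphar :: gammab :: gammar :: gtb :: gtr :: deltab :: deltar :: nil) ->
  Forall (nonneg_from T) (Sb :: Ib :: Rb :: Db :: Sr :: Ir :: Rr :: Dr :: nil) ->
  side_ode T betab q gammab gtb alphar (fun t => attack (deltar t) etar p (Sr t) (Ir t) (Rr t))
    Sb Ib Rb Db Sr Rr ->
  side_ode T betar q gammar gtr alphab (fun t => attack (deltab t) etab p (Sb t) (Ib t) (Rb t))
    Sr Ir Rr Dr Sb Rb ->
  Forall deriv_tends_to_0 (Sb :: Ib :: Rb :: Db :: Sr :: Ir :: Rr :: Dr :: nil).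
Proof.
  intros Hbb Hbr Heb Her Hp Hq Npar Tpar Nst Hblue Hred.
  repeat rewrite Forall_cons_iff in Npar, Tpar, Nst.
  destruct Npar as (Nab & Nar & Ngb & Ngr & Ntb & Ntr & Ndb & Ndr & _).
  destruct Tpar as (Tab & Tar & Tgb & Tgr & Ttb & Ttr & Tdb & Tdr & _).
  destruct Nst as (NSb & NIb & NRb & NDb & NSr & NIr & NRr & NDr & _).
  set (Ar := fun t => attack (deltar t) etar p (Sr t) (Ir t) (Rr t)) in Hblue.
  set (Ab := fun t => attack (deltab t) etab p (Sb t) (Ib t) (Rb t)) in Hred.
  (* conservation bounds the compartments, hence the attack strengths *)
  destruct (side_bounded _ _ _ _ _ _ _ _ _ _ _ _ _ Hblue NSb NIb NRb NDb) as (BSb & BIb & BRb & _).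
  destruct (side_bounded _ _ _ _ _ _ _ _ _ _ _ _ _ Hred NSr NIr NRr NDr) as (BSr & BIr & BRr & _).
  assert (NAr : nonneg_from T Ar) by (intros t Ht; apply attack_nonneg; auto).
  assert (NAb : nonneg_from T Ab) by (intros t Ht; apply attack_nonneg; auto).
  assert (BAr : bounded_from T Ar) by (apply bounded_attack; try apply Tdr; assumption).
  assert (BAb : bounded_from T Ab) by (apply bounded_attack; try apply Tdb; assumption).
  (* bounded derivatives: the compartments are uniformly continuous, the attacks tame *)
  assert (Ub : unif_cont_from T Sb /\ unif_cont_from T Ib /\ unif_cont_from T Rb)
    by (apply (side_unif_cont T betab q gammab gtb alphar Ar Sb Ib Rb Db Sr Rr);
        try assumption; eapply proj2; eassumption).
  assert (Ur : unif_cont_from T Sr /\ unif_cont_from T Ir /\ unif_cont_from T Rr)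
    by (apply (side_unif_cont T betar q gammar gtr alphab Ab Sr Ir Rr Dr Sb Rb);
        try assumption; eapply proj2; eassumption).
  destruct Ub as (USb & UIb & URb). destruct Ur as (USr & UIr & URr).
  assert (TAr : tame T Ar) by (apply tame_attack; try assumption; split; assumption).
  assert (TAb : tame T Ab) by (apply tame_attack; try assumption; split; assumption).
  destruct (side_derivatives_vanish T betab q gammab gtb alphar Ar Sb Ib Rb Db Sr Rr)
    as (VSb & VIb & VRb & VDb); try assumption; try (split; assumption).
  destruct (side_derivatives_vanish T betar q gammar gtr alphab Ab Sr Ir Rr Dr Sb Rb)
    as (VSr & VIr & VRr & VDr); try assumption; try (split; assumption).
  repeat constructor; assumption.
Qed.

Theorem proposition3
  (* constant parameters *)
  (betab betar etab etar p q : R)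
  (* possibly switched (piecewise constant in time) parameters *)
  (alphab alphar gammab gammar gtb gtr deltab deltar : R -> R)
  (* switching event times *)
  (ev : list R) (T0 : R)
  (* the solution *)
  (Sb Ib Rb Db Sr Ir Rr Dr : R -> R)
  (* parameter ranges *)
  (Hbeta : 0 <= betab /\ 0 <= betar)
  (Heta : 0 <= etab <= 1 /\ 0 <= etar <= 1)
  (Hpq : 0 <= p /\ 0 <= q)
  (Hpar : forall t, 0 <= alphab t /\ 0 <= alphar t /\ 0 <= gammab t <= 1 /\
          0 <= gammar t <= 1 /\ 0 <= gtb t /\ 0 <= gtr t /\
          0 <= deltab t /\ 0 <= deltar t)
  (* piecewise constant with finitely many switching events *)
  (Hpw : Forall (piecewise_const ev)
           (alphab :: alphar :: gammab :: gammar :: gtb :: gtr :: deltab :: deltar :: nil))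
  (* all parameters constant for t >= T0 *)
  (HT0 : Forall (const_from T0)
           (alphab :: alphar :: gammab :: gammar :: gtb :: gtr :: deltab :: deltar :: nil))
  (* nonnegative components for all t >= 0 *)
  (Hnn : forall t, 0 <= t ->
          0 <= Sb t /\ 0 <= Ib t /\ 0 <= Rb t /\ 0 <= Db t /\
          0 <= Sr t /\ 0 <= Ir t /\ 0 <= Rr t /\ 0 <= Dr t)
  (* the solution is continuous for t > 0 *)
  (Hcont : forall t, 0 < t -> Forall (fun C => continuity_pt C t)
           (Sb :: Ib :: Rb :: Db :: Sr :: Ir :: Rr :: Dr :: nil))
  (* the ODE system holds for t > 0 away from switching events *)
  (Hode : forall t, 0 < t -> ~ In t ev ->
     let Ar := attack (deltar t) etar p (Sr t) (Ir t) (Rr t) in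
     let Ab := attack (deltab t) etab p (Sb t) (Ib t) (Rb t) in
     derivable_pt_lim Sb t
       (rhsS betab (gammab t) (alphar t) Ar q (Sb t) (Ib t) (Rb t) (Sr t) (Rr t)) /\
     derivable_pt_lim Ib t
       (rhsI betab (gtb t) (alphar t) Ar q (Sb t) (Ib t) (Rb t) (Sr t) (Rr t)) /\
     derivable_pt_lim Rb t (rhsR (gammab t) (gtb t) Ar q (Sb t) (Ib t) (Rb t)) /\
     derivable_pt_lim Db t (rhsD Ar q (Sb t) (Ib t) (Rb t)) /\
     derivable_pt_lim Sr t
       (rhsS betar (gammar t) (alphab t) Ab q (Sr t) (Ir t) (Rr t) (Sb t) (Rb t)) /\
     derivable_pt_lim Ir t
       (rhsI betar (gtr t) (alphab t) Ab q (Sr t) (Ir t) (Rr t) (Sb t) (Rb t)) /\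
     derivable_pt_lim Rr t (rhsR (gammar t) (gtr t) Ab q (Sr t) (Ir t) (Rr t)) /\
     derivable_pt_lim Dr t (rhsD Ab q (Sr t) (Ir t) (Rr t))) :
  Forall deriv_tends_to_0 (Sb :: Ib :: Rb :: Db :: Sr :: Ir :: Rr :: Dr :: nil).
Proof.
  (* a time T >= max(1, T0) after all switching events: from T on the
     parameters are constant and the equations hold at every time *)
  destruct (time_after_events ev (Rmax 1 T0)) as [T [HT Hev]].
  pose proof (Rmax_l 1 T0) as H1T. pose proof (Rmax_r 1 T0) as HT0T.
  assert (Hnev : forall t, T <= t -> ~ In t ev) by (intros t Ht Hin; pose proof (Hev t Hin); lra).
  apply (coupled_derivatives_vanish T betab betar etab etar p q
           alphab alphar gammab gammar gtb gtr deltab deltar Sb Ib Rb Db Sr Ir Rr Dr);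
    try tauto.
  - repeat apply Forall_cons; try apply Forall_nil; intros t _; pose proof (Hpar t); tauto.
  - apply (Forall_impl _ (fun h Hh => tame_of_const_from T0 T h Hh ltac:(lra)) HT0).
  - repeat apply Forall_cons; try apply Forall_nil; intros t Ht; pose proof (Hnn t ltac:(lra)); tauto.
  - intros t Ht. pose proof (Hode t ltac:(lra) (Hnev t Ht)) as Hsys. cbv zeta in Hsys. tauto.
  - intros t Ht. pose proof (Hode t ltac:(lra) (Hnev t Ht)) as Hsys. cbv zeta in Hsys. tauto.
Qed.
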